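(* Consider sources $m\neq n$ and a relay $i$. Let $A$ be a nonempty set of relays other than $i$, so that the coalition $\mathcal S_m=\{m\}\cup A\cup\{i\}$ contains more than two members, and let $\mathcal S_n=\{n,i\}$ be the coalition in which relay $i$ is the only relay helping source $n$. Ignore costs ($\kappa=0$) and use the user-fairness payoff. If $\phi_i(\mathcal S_m)<\phi_i(\mathcal S_n)$, i.e. $$\frac{G_{mi}}{D_m+G_{mi}+\sum_{j\in A}G_{mj}}<\frac{G_{ni}}{D_n+G_{ni}},$$ then $v(\mathcal S_m)+v(\{n\})<v(\{m\}\cup A)+v(\mathcal S_n)$.
   Context: Multi-source model: $M$ sources, relays, one destination. For source $k$ and relay $j$, $G_{kj}=P_{kj}|g_j|^2/(1+c_j^\alpha)\ge0$ is the SNR contribution of relay $j$ when helping source $k$ (with $P_{kj}=\max\{0,\eta(P|h_{kj}|^2/(1+d_{kj}^\alpha)-\tau)\}$ the harvested power), and $D_k=P|h_{dk}|^2/(1+d_{0k}^\alpha)\ge0$ is the direct-link SNR of source $k$. A coalition $\mathcal S_k$ consists of source $k$ and a set $B$ of relays; $SNR_{\mathcal S_k}=D_k+\sum_{j\in B}G_{kj}$. User-fairness payoff of relay $j\in B$: $\phi_j(\mathcal S_k)=\frac{SNR_{\mathcal S_k}-SNR_{\mathcal S_k\setminus\{j\}}}{SNR_{\mathcal S_k}}-c(\mathcal S_k)=\frac{G_{kj}}{SNR_{\mathcal S_k}}-c(\mathcal S_k)$, where the cost $c(\mathcal S_k)=\kappa\cdot\#\{\text{relays in }B\text{ that decode source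 }k\}$. Coalition value $v(\mathcal S_k)=\sum_{j\in B}\phi_j(\mathcal S_k)$ (so a coalition with no relays has value $0$). Assume all SNRs appearing in denominators are positive (e.g. $D_m>0$ and $D_n+G_{ni}>0$). *)

From HB Require Import structures.
From mathcomp Require Import all_boot all_order all_algebra.
Set Implicit Arguments. Unset Strict Implicit. Unset Printing Implicit Defensive.
Import Order.TTheory GRing.Theory Num.Theory.
Local Open Scope ring_scope.

(* Sources range over a finite type [Src], relays over a finite type [Rel].
   [G k j] : SNR contribution of relay j helping source k.
   [D k]   : direct-link SNR of source k.
   [dec k j] : relay j decodes source k (used only in the cost).
   A coalition S_k is source k together with a set B : {set Rel} of relays. *)

Definition SNR (R : realFieldType) (Src Rel : finType)
  (G : Src -> Rel -> R) (D : Src -> R) (k : Src) (B : {set Rel}) : R :=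
  D k + \sum_(j in B) G k j.

Definition cost (R : realFieldType) (Src Rel : finType)
  (kappa : R) (dec : Src -> Rel -> bool) (k : Src) (B : {set Rel}) : R :=
  kappa * (#|[set j in B | dec k j]|)%:R.

Definition phi (R : realFieldType) (Src Rel : finType)
  (G : Src -> Rel -> R) (D : Src -> R) (kappa : R) (dec : Src -> Rel -> bool)
  (k : Src) (B : {set Rel}) (j : Rel) : R :=
  (SNR G D k B - SNR G D k (B :\ j)) / SNR G D k B - cost kappa dec k B.

Definition value (R : realFieldType) (Src Rel : finType)
  (G : Src -> Rel -> R) (D : Src -> R) (kappa : R) (dec : Src -> Rel -> bool)
  (k : Src) (B : {set Rel}) : R :=
  \sum_(j in B) phi G D kappa dec k B j.

From HB Require Import structures.
From mathcomp Require Import all_boot all_order all_algebra.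
From mathcomp Require Import ring lra.
Set Implicit Arguments. Unset Strict Implicit.
Import Order.TTheory GRing.Theory Num.Theory.
Local Open Scope ring_scope.

(* Without costs the value of a coalition is [1 - D_k / SNR], so adding relay
   i to {m} ∪ A raises the value by [D_m G_mi / (SNR_A SNR_{A+i})], which is at
   most i's own payoff [G_mi / SNR_{A+i}] because [D_m <= SNR_A].  That payoff
   is below [phi_i(S_n)], which is the whole value of [S_n], while [{n}] alone
   is worth 0. *)

Lemma ler_subr_div_addr (R : realFieldType) (d t g : R) :
  0 <= d -> d <= t -> 0 < t -> 0 <= g -> d / t - d / (t + g) <= g / (t + g).
Proof.
move=> d0 dt t0 g0.
have tg0 : 0 < t + g by lra.
have -> : d / t - d / (t + g) = (d / t) * (g / (t + g)).
  by field; rewrite ?gt_eqF.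
apply: ler_piMl; first by rewrite divr_ge0 // ltW.
by rewrite ler_pdivrMr // mul1r.
Qed.

Section CostFreeUserFairness.

Variables (R : realFieldType) (Src Rel : finType).
Variables (G : Src -> Rel -> R) (D : Src -> R) (dec : Src -> Rel -> bool).

Lemma SNR_setU1 k (B : {set Rel}) j :
  j \notin B -> SNR G D k (j |: B) = SNR G D k B + G k j.
Proof. by move=> jB; rewrite /SNR big_setU1 //=; ring. Qed.

Lemma phi0E k (B : {set Rel}) j :
  j \in B -> phi G D 0 dec k B j = G k j / SNR G D k B.
Proof.
move=> jB; rewrite /phi /cost mul0r subr0 /SNR (big_setD1 j jB) /=.
by congr (_ / _); ring.
Qed.

Lemma value0E k (B : {set Rel}) :
  SNR G D k B != 0 -> value G D 0 dec k B = 1 - D k / SNR G D k B.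
Proof.
move=> SNR_neq0; rewrite /value (eq_bigr (fun j => G k j / SNR G D k B)).
  rewrite -mulr_suml; apply: (mulIf SNR_neq0).
  by rewrite mulrBl !divfK // mul1r /SNR; ring.
by move=> j jB; rewrite phi0E.
Qed.

Lemma value_set0 kappa k : value G D kappa dec k set0 = 0.
Proof. by rewrite /value big_set0. Qed.

Lemma value_set1 kappa k j :
  value G D kappa dec k [set j] = phi G D kappa dec k [set j] j.
Proof. by rewrite /value big_set1. Qed.

Lemma value0_setU1_sub_le_phi k (B : {set Rel}) j :
  (forall l, 0 <= G k l) -> 0 <= D k -> 0 < SNR G D k B -> j \notin B ->
  value G D 0 dec k (j |: B) - value G D 0 dec k B
    <= phi G D 0 dec k (j |: B) j.
Proof.
move=> G_ge0 D_ge0 SNR_gt0 jB.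
have D_le_SNR : D k <= SNR G D k B by rewrite lerDl sumr_ge0.
have SNRj_gt0 : 0 < SNR G D k (j |: B).
  by rewrite SNR_setU1 // ltr_wpDr.
rewrite phi0E ?setU11 // !value0E ?gt_eqF // SNR_setU1 //.
have := ler_subr_div_addr D_ge0 D_le_SNR SNR_gt0 (G_ge0 j).
lra.
Qed.

End CostFreeUserFairness.

Theorem proposition2 (R : realFieldType) (Src Rel : finType)
  (G : Src -> Rel -> R) (D : Src -> R) (dec : Src -> Rel -> bool)
  (m n : Src) (i : Rel) (A : {set Rel})
  (hG : forall k j, 0 <= G k j) (hD : forall k, 0 <= D k)
  (hDm : 0 < D m) (hDn : 0 < D n + G n i)
  (hmn : m != n) (hA : A != set0) (hiA : i \notin A)
  (hphi : phi G D 0 dec m (i |: A) i < phi G D 0 dec n [set i] i) :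
  value G D 0 dec m (i |: A) + value G D 0 dec n set0
    < value G D 0 dec m A + value G D 0 dec n [set i].
Proof.
have SNR_A_gt0 : 0 < SNR G D m A by rewrite ltr_wpDr // sumr_ge0.
have gain := value0_setU1_sub_le_phi dec (hG m) (hD m) SNR_A_gt0 hiA.
rewrite value_set0 value_set1 addr0.
lra.
Qed.
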